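(* Let $(S,d)$ be a finite metric space partitioned into two disjoint groups $S=S_1\cup S_2$, let $k_1,k_2$ be nonnegative integers with $k=k_1+k_2$, and let $r^*$ be the optimal radius of the fair $k$-center problem on this instance. For $l\in\{1,2\}$ let $\Gamma_l\subseteq S_l$ be a $2r^*$-independent center set of $S_l$, and suppose $|\Gamma_1|>k_1$ and $|\Gamma_2|>k_2$. Run Phase 1 (described in the context) on $\Gamma_1,\Gamma_2$. Then when Phase 1 completes, the resulting set $C$ satisfies $|C\cap S_l|\le k_l$ for each $l\in\{1,2\}$.
   Context: The fair $k$-center problem: a set $C\subseteq S$ is feasible if $|C\cap S_l|\le k_l$ for each $l$; its cost is $\max_{s\in S}d(s,C)$ with $d(s,C)=\min_{c\in C}d(s,c)$ and $d(s,\emptyset)=\infty$. The optimal radius $r^*$ is the minimum cost over feasible $C$. For $T\subseteq S$, a set $\Gamma\subseteq T$ is a $\lambda$-independent center set of $T$ if (1) $d(p,q)>\lambda$ for any two distinct $p,q\in\Gamma$, and (2) every $p\in T$ has some $q\in\Gamma$ with $d(p,q)\le\lambda$. Phase 1: set $C\leftarrow\emptyset$; build the bipartite auxiliary graph $G$ with vertex set $\Gamma_1\cup\Gamma_2$ in which $p\in\Gamma_1$ and $q\in\Gamma_2$ are joined by an edge iff $d(p,q)\le 3r^*$ (no other edges); then, for each vertex $i$ of degree $0$ in $G$ (in any order), if $d(C,i)>2r^*$ add $i$ to $C$; finally remove all degree-$0$ vertices from $G$. *)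

From HB Require Import structures.
From mathcomp Require Import all_boot all_order all_algebra.
From mathcomp Require Import reals constructive_ereal.
Set Implicit Arguments. Unset Strict Implicit. Unset Printing Implicit Defensive.
Import Order.TTheory GRing.Theory Num.Theory.
Local Open Scope ring_scope.
Local Open Scope ereal_scope.

Section FairKCenter.
Variables (R : realType) (T : finType) (d : T -> T -> R).

Definition is_metric : Prop :=
  [/\ forall x y, d x y = 0%R <-> x = y,
      forall x y, d x y = d y x &
      forall x y z, (d x z <= d x y + d y z)%R].

Definition dist_set (C : {set T}) (s : T) : \bar R :=
  \big[mine/+oo]_(c in C) (d s c)%:E.

(* cost(C) = max_{s in S} d(s,C), S = the whole (finite) space T *)
Definition cost (C : {set T}) : \bar R :=
  \big[maxe/-oo]_(s : T) dist_set C s.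

Definition feasible (S1 S2 : {set T}) (k1 k2 : nat) (C : {set T}) : bool :=
  (#|C :&: S1| <= k1)%N && (#|C :&: S2| <= k2)%N.

Definition opt_radius (S1 S2 : {set T}) (k1 k2 : nat) : \bar R :=
  \big[mine/+oo]_(C : {set T} | feasible S1 S2 k1 k2 C) cost C.

Definition indep_center_set (lam : \bar R) (Tset Gamma : {set T}) : Prop :=
  [/\ Gamma \subset Tset,
      (forall p q, p \in Gamma -> q \in Gamma -> p != q -> lam < (d p q)%:E) &
      (forall p, p \in Tset -> exists2 q, q \in Gamma & (d p q)%:E <= lam)].

Definition aux_edge (r : \bar R) (G1 G2 : {set T}) (p q : T) : bool :=
  [&& p \in G1, q \in G2 & (d p q)%:E <= 3%:E * r].

Definition deg0 (r : \bar R) (G1 G2 : {set T}) : {set T} :=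
  [set i in G1 :|: G2 |
     [forall j, ~~ aux_edge r G1 G2 i j && ~~ aux_edge r G1 G2 j i]].

(* Phase 1 processing the degree-0 vertices in the order given by s *)
Definition phase1 (r : \bar R) (s : seq T) : {set T} :=
  foldl (fun C i => if 2%:E * r < dist_set C i then i |: C else C) set0 s.

End FairKCenter.

(* An optimal feasible solution C* of radius r* puts every point within r* of
   some center of C*.  A point i that Phase 1 keeps in C lies in Gamma_1, say,
   and has degree 0, so it is more than 3r* away from Gamma_2; its nearest
   optimal center c is then in S_1, since otherwise the point of Gamma_2 that
   covers c within 2r* would be within 3r* of i.  Points of C are pairwise more
   than 2r* apart, so by the triangle inequality i |-> c is injective, whence
   |C cap S_1| <= |C* cap S_1| <= k_1.  If r* = +oo the graph is complete
   bipartite, no vertex has degree 0 and C is empty. *)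
From HB Require Import structures.
From mathcomp Require Import all_boot all_order all_algebra.
From mathcomp Require Import reals constructive_ereal.
From mathcomp Require Import lra.

Set Implicit Arguments.
Unset Strict Implicit.
Unset Printing Implicit Defensive.
Import Order.TTheory GRing.Theory Num.Theory.
Local Open Scope ring_scope.
Local Open Scope ereal_scope.

Section FairKCenterPhase1.
Variables (R : realType) (T : finType) (d : T -> T -> R).

Definition separated (r : \bar R) (A : {set T}) : Prop :=
  forall x y, x \in A -> y \in A -> x != y -> r < (d x y)%:E.

Lemma opt_radius_attained S1 S2 k1 k2 :
  exists2 C, feasible S1 S2 k1 k2 C & opt_radius d S1 S2 k1 k2 = cost d C.
Proof.
have feas0 : feasible S1 S2 k1 k2 set0 by rewrite /feasible !set0I cards0.
have [C ? optE] := eq_bigmin _ _ _ feas0 (fun C _ => leey (cost d C)).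
by exists C; rewrite // /opt_radius optE.
Qed.

Lemma dist_set_le_cost C i : dist_set d C i <= cost d C.
Proof. exact: le_bigmax. Qed.

Lemma cost_gtNy C (i : T) : -oo < cost d C.
Proof.
apply: lt_le_trans (dist_set_le_cost C i).
by apply: lt_bigmin => [|c _]; rewrite ?ltNyr.
Qed.

Lemma cost_le_near C (r : R) :
  cost d C <= r%:E -> forall i, exists2 c, c \in C & (d i c <= r)%R.
Proof.
move=> costC i; apply/exists_inP; apply: contraTT costC => /exists_inPn far.
rewrite -ltNge; apply: lt_le_trans (dist_set_le_cost C i).
by apply: lt_bigmin => [|c /far]; rewrite ?ltry // lte_fin ltNge.
Qed.

Definition phase1_step (r : \bar R) (C : {set T}) (i : T) : {set T} :=
  if 2%:E * r < dist_set d C i then i |: C else C.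

Lemma phase1E r s : phase1 d r s = foldl (phase1_step r) set0 s.
Proof. by []. Qed.

Lemma mem_phase1 r s x : x \in phase1 d r s -> x \in s.
Proof.
rewrite phase1E; suff: forall C0, x \in foldl (phase1_step r) C0 s ->
  (x \in C0) || (x \in s) by move=> /[apply]; rewrite inE.
elim: s => [|a s IHs] C0 /=; first by rewrite orbF.
move=> /IHs; rewrite inE /phase1_step.
by case: ifP => _; rewrite ?inE; case: (x == a); rewrite ?orbT.
Qed.

Lemma aux_edgeC r G1 G2 p q :
  (forall x y, d x y = d y x) ->
  aux_edge d r G1 G2 p q = aux_edge d r G2 G1 q p.
Proof. by move=> dsym; rewrite /aux_edge dsym andbCA. Qed.

Lemma deg0C r G1 G2 :
  (forall x y, d x y = d y x) -> deg0 d r G1 G2 = deg0 d r G2 G1.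
Proof.
move=> dsym; apply/setP => i; rewrite !inE orbC; congr (_ && _).
apply: eq_forallb => j.
by rewrite (aux_edgeC r G1 G2 i j dsym) (aux_edgeC r G1 G2 j i dsym) andbC.
Qed.

Lemma deg0_pinfty (G1 G2 : {set T}) p q :
  p \in G1 -> q \in G2 -> deg0 d +oo G1 G2 = set0.
Proof.
have edge x y : x \in G1 -> y \in G2 -> aux_edge d +oo G1 G2 x y.
  by move=> xG1 yG2; rewrite /aux_edge xG1 yG2 gt0_muley ?leey ?lte_fin.
move=> pG1 qG2; apply/setP => i; rewrite inE in_set0.
case/boolP: (i \in G1 :|: G2) => //= /setUP[iG1 | iG2]; apply/negbTE/forallPn.
- by exists q; rewrite (edge i q).
- by exists p; rewrite (edge p i) ?andbF.
Qed.

Lemma deg0_far (r : R) (G1 G2 : {set T}) i q :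
  i \in deg0 d r%:E G1 G2 -> i \in G1 -> q \in G2 -> (3 * r < d i q)%R.
Proof.
rewrite inE => /andP[_ /forallP/(_ q)/andP[+ _]] iG1 qG2.
by rewrite /aux_edge iG1 qG2 -EFinM lee_fin /= -ltNge.
Qed.

Section Metric.
Hypotheses (dsym : forall x y, d x y = d y x)
           (tri : forall x y z, (d x z <= d x y + d y z)%R).

Lemma separated_phase1 r s : separated (2%:E * r) (phase1 d r s).
Proof.
rewrite phase1E; have : separated (2%:E * r) set0 by move=> x y; rewrite inE.
elim: s set0 => [|a s IHs] C0 sepC0 //=; apply: IHs; rewrite /phase1_step.
case: ifP => // far x y; rewrite !inE.
have near c : c \in C0 -> 2%:E * r < (d a c)%:E.
  by move=> cC0; apply: lt_le_trans far (bigmin_le_cond _ _ cC0).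
case/predU1P => [->|xC0]; case/predU1P => [->|yC0]; rewrite ?eqxx // => xy.
- exact: near.
- by rewrite dsym; apply: near.
- exact: sepC0.
Qed.

Lemma card_separated_le (r : R) (A B : {set T}) :
  separated (2%:E * r%:E) A ->
  (forall x, x \in A -> exists2 c, c \in B & (d x c <= r)%R) ->
  (#|A| <= #|B|)%N.
Proof.
move=> sepA coverA.
pose f x := odflt x [pick c in B | (d x c <= r)%R].
have fP x : x \in A -> f x \in B /\ (d x (f x) <= r)%R.
  move=> /coverA[c cB dxc]; rewrite /f.
  by case: pickP => [c' /andP[]|/(_ c)] //; rewrite cB dxc.
have f_inj : {in A &, injective f}.
  move=> x y xA yA fxy; apply/eqP; apply: contraTT isT => xy.
  have := sepA x y xA yA xy; rewrite -EFinM lte_fin.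
  have [_ dx] := fP x xA; have [_ dy] := fP y yA.
  move: (tri x (f x) y); rewrite fxy (dsym (f y)) in dx * => tri_xy.
  by lra.
rewrite -(card_in_imset f_inj); apply/subset_leq_card/subsetP.
by move=> _ /imsetP[x xA ->]; case: (fP x xA).
Qed.

Lemma phase1_card_le (r : R) (S1 S2 G1 G2 Cs : {set T}) (s : seq T) :
  S1 :&: S2 = set0 -> S1 :|: S2 = setT ->
  indep_center_set d (2%:E * r%:E) S2 G2 ->
  cost d Cs <= r%:E ->
  {subset s <= deg0 d r%:E G1 G2} ->
  (#|phase1 d r%:E s :&: S1| <= #|Cs :&: S1|)%N.
Proof.
move=> S12 S1S2 [G2S2 _ coverS2] costCs s_deg0.
apply: (@card_separated_le r) => [x y /setIP[xC _] /setIP[yC _]|].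
  exact: separated_phase1 xC yC.
move=> i /setIP[/mem_phase1/s_deg0 i_deg0 iS1].
have iG1 : i \in G1.
  move: (i_deg0); rewrite !inE => /andP[/orP[//|/(subsetP G2S2) iS2] _].
  by move: (in_set0 i); rewrite -S12 inE iS1 iS2.
have [c cCs dic] := cost_le_near costCs i.
exists c => //; rewrite inE cCs /=.
case/boolP: (c \in S1) => // cS1.
have cS2 : c \in S2 by move: (in_setT c); rewrite -S1S2 inE (negbTE cS1).
have [q qG2] := coverS2 c cS2.
rewrite -EFinM lee_fin => dcq.
by have := deg0_far i_deg0 iG1 qG2; have := tri i c q; lra.
Qed.

End Metric.

End FairKCenterPhase1.

Theorem lemma3 (R : realType) (T : finType) (d : T -> T -> R)
  (S1 S2 : {set T}) (k1 k2 : nat) (Gamma1 Gamma2 : {set T}) (s : seq T) :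
  is_metric d ->
  S1 :&: S2 = set0 -> S1 :|: S2 = setT ->
  let rstar := opt_radius d S1 S2 k1 k2 in
  indep_center_set d (2%:E * rstar) S1 Gamma1 ->
  indep_center_set d (2%:E * rstar) S2 Gamma2 ->
  (k1 < #|Gamma1|)%N -> (k2 < #|Gamma2|)%N ->
  perm_eq s (enum (deg0 d rstar Gamma1 Gamma2)) ->
  let C := phase1 d rstar s in
  (#|C :&: S1| <= k1)%N /\ (#|C :&: S2| <= k2)%N.
Proof.
move=> [_ dsym tri] S12 S1S2 rstar indep1 indep2 k1G1 k2G2 s_deg0 C.
have [Cs /andP[Cs1 Cs2] rstarE] := opt_radius_attained d S1 S2 k1 k2.
rewrite -/rstar in rstarE; clearbody rstar.
have [p pG1] : exists p, p \in Gamma1.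
  by apply/set0Pn; rewrite -card_gt0 (leq_ltn_trans _ k1G1).
have [q qG2] : exists q, q \in Gamma2.
  by apply/set0Pn; rewrite -card_gt0 (leq_ltn_trans _ k2G2).
have sub_deg0 : {subset s <= deg0 d rstar Gamma1 Gamma2}.
  by move=> x; rewrite (perm_mem s_deg0) mem_enum.
have [rstar_oo | rstar_fin] := eqVneq rstar +oo.
  suff -> : C = set0 by rewrite !set0I cards0.
  apply/setP => x; rewrite inE; apply/negbTE/negP => /mem_phase1/sub_deg0.
  by rewrite rstar_oo (deg0_pinfty d pG1 qG2) inE.
have [r rE] : exists r, rstar = r%:E.
  exists (fine rstar); rewrite fineK // fin_numE rstar_fin andbT.
  by rewrite rstarE gt_eqF // (cost_gtNy d Cs p).
subst C; rewrite {}rE in rstarE indep1 indep2 sub_deg0 *.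
have costCs : cost d Cs <= r%:E by rewrite rstarE.
split; [apply: leq_trans Cs1 | apply: leq_trans Cs2].
- exact: (phase1_card_le dsym tri S12 S1S2 indep2 costCs sub_deg0).
- rewrite deg0C // in sub_deg0.
  rewrite setIC in S12; rewrite setUC in S1S2.
  exact: (phase1_card_le dsym tri S12 S1S2 indep1 costCs sub_deg0).
Qed.
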